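(* Let $Q$ be a groupoid quantale with base locale $A$ and let $X$ be a principal $Q$-locale over a locale $M$. Then $X$ is a fully open principal $G$-bundle over $M$, where $G=\mathcal G(Q)$ is the open groupoid of $Q$ (with anchor $p$ given by $p^*(a)=a\triangleright1_X$, action $a_X$ with $a_X^*(x)=\bigvee_{q\cdot y\le x}q\otimes y$, and bundle map $\pi:X\to M$ the open surjection whose direct image is $\tilde\varsigma$).
   Context: Let $A$ be a locale. A groupoid quantale $Q$ (base locale $A$) is an involutive quantale which is an $A$-$A$-bimodule (actions $a\triangleright q$, $q\triangleleft a$) with $(a\triangleright x)y=a\triangleright(xy)$, $(x\triangleleft a)y=x(a\triangleright y)$, $(xy)\triangleleft a=x(y\triangleleft a)$, $(a\triangleright x\triangleleft b)^*=b\triangleright x^*\triangleleft a$; a frame with $(a\triangleright q)\wedge m=a\triangleright(q\wedge m)$, $m\wedge(q\triangleleft a)=(q\wedge m)\triangleleft a$; equipped with a sup-lattice homomorphism $\varsigma_Q:Q\to A$ with $\varsigma_Q(1_Q)=1_A$, $\varsigma_Q(x)\triangleright y\le xx^*y$, $\varsigma_Q(x)\triangleright x=x$, $\varsigma_Q(a\triangleright x)=a\wedge\varsigma_Q(x)$, and a frame homomorphism $\upsilon:Q\to A$ with $\upsilon(a\triangleright1_Q)=a=\upsilon(1_Q\triangleleft a)$; the right adjoint of $Q\otimes_AQ\to Q$ preserves joins; $\bigvee_{xy\le a}\upsilon(x)\triangleright y=a$, $\upsilon(a)\triangleright1_Q=\bigvee_{xx^*\le a}x$. Its open groupoid $G=\mathcal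 G(Q)$ has $\mathcal O(G_1)=Q$, $\mathcal O(G_0)=A$, $d^*(a)=a\triangleright1_Q$, $r^*(a)=1_Q\triangleleft a$, $d_!=\varsigma_Q$, $u^*=\upsilon$, with quantale $\mathcal O(G)=Q$. A $Q$-module is a locale $X$ with a left $Q$-action $q\cdot x$ and unital left $A$-module structure $a\triangleright x$ with $(a\triangleright q)\cdot x=a\triangleright(q\cdot x)$, $(q\triangleleft a)\cdot x=q\cdot(a\triangleright x)$, $a\triangleright(x\wedge y)=(a\triangleright x)\wedge y$. A pre-Hilbert $Q$-module has $\langle-,-\rangle:X\times X\to Q$ with $\langle q\cdot x,y\rangle=q\langle x,y\rangle$, $a\triangleright\langle x,1_X\rangle=\langle a\triangleright x,1_X\rangle$, $\langle\bigvee x_\alpha,y\rangle=\bigvee\langle x_\alpha,y\rangle$, $\langle x,y\rangle=\langle y,x\rangle^*$. A stably supported $Q$-module has in addition a monotone $\varsigma_X:X\to A$ with $\varsigma_X(1_X)=1_A$, $\varsigma_X(x)\triangleright1_X\le\langle x,x\rangle\cdot1_X$, $\varsigma_X(x)\triangleright x=x$, $\varsigma_X(q\cdot x)\le\varsigma_Q(q)$. With $Q\otimes_AX$ the quotient of $Q\otimes X$ by $(q\triangleleft a)\otimes x=q\otimes(a\triangleright x)$, a $Q$-locale is a stably supported $Q$-module such that $\alpha_*:X\to Q\otimes_AX$, $\alpha_*(x)=\bigvee_{q\cdot y\le x}q\otimes y$, preserves joins, and $\bigvee_{q\cdot y\le x}\upsilon(q)\triangleright y=x$ for all $x$. A principal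 $Q$-locale over a locale $M$ is a $Q$-locale $X$ such that (P1) $X$ is an open $M$-locale, i.e. there is an open map of locales $\pi:X\to M$, with direct image $\tilde\varsigma=\pi_!$ satisfying $\tilde\varsigma(1_X)=1_M$; (P2) $\tilde\varsigma(q\cdot x)=\tilde\varsigma(\varsigma_Q(q^* )\triangleright x)$ for all $q\in Q$, $x\in X$; (P3) the map $\varphi:X\otimes_MX\to Q\otimes_AX$, $\varphi(x\otimes y)=\bigvee_{q\cdot z\le x}q\otimes(z\wedge y)$, is a frame isomorphism. For an open groupoid $G$, a $G$-locale is a locale $X$ with anchor $p:X\to G_0$ and associative unital action $a:G_1\times_{G_0}X\to X$ with $p\circ a=r\circ\pi_1$. A principal $G$-bundle over $M$ is a $G$-locale with $\pi:X\to M$, $\pi\circ a=\pi\circ\pi_2$, $\langle a,\pi_2\rangle:G_1\times_{G_0}X\to X\times_MX$ an isomorphism and $\pi$ an open surjection; it is fully open if moreover $p$ is an open surjection. *)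

(* Frames/locales, quantale modules and the
   tensor products Q (x)_A X, X (x)_M X, Q (x)_A Q, Q (x)_A Q (x)_A X are
   developed concretely: a tensor element is represented as a "bimorphic"
   down-set of pairs, i.e. a predicate S on L x N that is down-closed,
   closed under joins in each variable separately, and saturated for the
   balancing relation.  This is the standard concrete model of the tensor
   product of sup-lattices (with balancing) and, for frames, of the frame
   coproduct / pushout, i.e. of the fibred product of locales. *)


Record Frame := {
  fcar :> Type;
  le : fcar -> fcar -> Prop;
  sup : (fcar -> Prop) -> fcar;
  meet : fcar -> fcar -> fcar;
  le_refl : forall x, le x x;
  le_trans : forall x y z, le x y -> le y z -> le x z;
  le_antisym : forall x y, le x y -> le y x -> x = y;
  sup_ub : forall (S : fcar -> Prop) x, S x -> le x (sup S);
  sup_least : forall (S : fcar -> Prop) y, (forall x, S x -> le x y) -> le (sup S) y;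
  meet_glb : forall x y z, le z (meet x y) <-> (le z x /\ le z y);
  meet_sup : forall x (S : fcar -> Prop),
      meet x (sup S) = sup (fun y => exists s, S s /\ y = meet x s)
}.

Arguments le {f} _ _.
Arguments sup {f} _.
Arguments meet {f} _ _.

Definition top (F : Frame) : F := sup (fun _ : F => True).

Definition img {X Y : Type} (f : X -> Y) (P : X -> Prop) : Y -> Prop :=
  fun y => exists x, P x /\ y = f x.

Definition sup_hom {L N : Frame} (f : L -> N) : Prop :=
  forall P : L -> Prop, f (sup P) = sup (img f P).

Definition frame_hom {L N : Frame} (f : L -> N) : Prop :=
  sup_hom f /\ (forall x y, f (meet x y) = meet (f x) (f y)) /\ f (top L) = top N.

(* f^* : M -> X is the inverse image of an open map with direct image g *)
Definition open_inverse_image {M X : Frame} (fstar : M -> X) (fshriek : X -> M) : Prop :=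
  frame_hom fstar /\
  (forall x m, le (fshriek x) m <-> le x (fstar m)) /\
  (forall x m, fshriek (meet x (fstar m)) = meet (fshriek x) m).

Definition open_surjection {M X : Frame} (fstar : M -> X) : Prop :=
  (exists fshriek : X -> M, open_inverse_image fstar fshriek) /\
  (forall m m', fstar m = fstar m' -> m = m').

Section Tensor.
Variables (L N : Frame) (B : L -> N -> L -> N -> Prop).

Definition tclosed (S : L -> N -> Prop) : Prop :=
  (forall l n l' n', S l n -> le l' l -> le n' n -> S l' n') /\
  (forall (P : L -> Prop) n, (forall l, P l -> S l n) -> S (sup P) n) /\
  (forall l (P : N -> Prop), (forall n, P n -> S l n) -> S l (sup P)) /\
  (forall l n l' n', B l n l' n' -> (S l n <-> S l' n')).

Definition tgen (R : L -> N -> Prop) : L -> N -> Prop :=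
  fun l n => forall T, tclosed T -> (forall l' n', R l' n' -> T l' n') -> T l n.

Definition tpure (l : L) (n : N) : L -> N -> Prop :=
  tgen (fun l' n' => l' = l /\ n' = n).

Definition tjoin (F : (L -> N -> Prop) -> Prop) : L -> N -> Prop :=
  tgen (fun l n => exists S, F S /\ S l n).

Definition tmeet (S T : L -> N -> Prop) : L -> N -> Prop :=
  fun l n => S l n /\ T l n.

Definition ttop : L -> N -> Prop := fun _ _ => True.

Definition teq (S T : L -> N -> Prop) : Prop := forall l n, S l n <-> T l n.

Definition frame_hom_into (Y : Frame) (f : Y -> L -> N -> Prop) : Prop :=
  (forall y, tclosed (f y)) /\
  (forall P : Y -> Prop, teq (f (sup P)) (tjoin (img f P))) /\
  (forall x y, teq (f (meet x y)) (tmeet (f x) (f y))) /\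
  teq (f (top Y)) ttop.

End Tensor.

Arguments tclosed {L N} B S.
Arguments tgen {L N} B R _ _.
Arguments tpure {L N} B l n _ _.
Arguments tjoin {L N} B F _ _.
Arguments tmeet {L N} S T _ _.
Arguments ttop {L N} _ _.
Arguments teq {L N} S T.
Arguments frame_hom_into {L N} B {Y} f.

Definition tensor_hom {L N L' N' : Frame}
    (B : L -> N -> L -> N -> Prop) (B' : L' -> N' -> L' -> N' -> Prop)
    (h : (L -> N -> Prop) -> (L' -> N' -> Prop)) : Prop :=
  (forall S, tclosed B S -> tclosed B' (h S)) /\
  (forall S T, tclosed B S -> tclosed B T -> teq S T -> teq (h S) (h T)) /\
  (forall F, (forall S, F S -> tclosed B S) -> teq (h (tjoin B F)) (tjoin B' (img h F))) /\
  (forall S T, tclosed B S -> tclosed B T -> teq (h (tmeet S T)) (tmeet (h S) (h T))) /\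
  teq (h ttop) ttop.

Definition tensor_iso {L N L' N' : Frame}
    (B : L -> N -> L -> N -> Prop) (B' : L' -> N' -> L' -> N' -> Prop)
    (h : (L -> N -> Prop) -> (L' -> N' -> Prop)) : Prop :=
  tensor_hom B B' h /\
  exists g : (L' -> N' -> Prop) -> (L -> N -> Prop),
    tensor_hom B' B g /\
    (forall S, tclosed B S -> teq (g (h S)) S) /\
    (forall T, tclosed B' T -> teq (h (g T)) T).

Record QData (A : Frame) := {
  Qf :> Frame;
  qmul : Qf -> Qf -> Qf;
  qinv : Qf -> Qf;
  qlact : A -> Qf -> Qf;
  qract : Qf -> A -> Qf;
  qsupp : Qf -> A;
  qups : Qf -> A
}.

Arguments qmul {A q} _ _.
Arguments qinv {A q} _.
Arguments qlact {A q} _ _.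
Arguments qract {A q} _ _.
Arguments qsupp {A q} _.
Arguments qups {A q} _.

Section GQ.
Variables (A : Frame) (Q : QData A).

(* balancing relation of Q (x)_A Q:  (x <| a) (x) y = x (x) (a |> y) *)
Definition BQQ (l n l' n' : Q) : Prop :=
  exists a : A, l = qract l' a /\ n' = qlact a n.

Definition qmu (S : Q -> Q -> Prop) : Q :=
  sup (fun z => exists x y, S x y /\ z = qmul x y).

Definition qmu_radj (q : Q) : Q -> Q -> Prop :=
  tjoin BQQ (fun T => tclosed BQQ T /\ le (qmu T) q).

Definition is_groupoid_quantale : Prop :=
  (forall x y z : Q, qmul (qmul x y) z = qmul x (qmul y z)) /\
  (forall (x : Q) (P : Q -> Prop), qmul x (sup P) = sup (img (qmul x) P)) /\
  (forall (P : Q -> Prop) (y : Q), qmul (sup P) y = sup (img (fun x => qmul x y) P)) /\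
  (forall x : Q, qinv (qinv x) = x) /\
  (forall x y : Q, qinv (qmul x y) = qmul (qinv y) (qinv x)) /\
  (forall P : Q -> Prop, qinv (sup P) = sup (img qinv P)) /\
  (forall (a : A) (P : Q -> Prop), qlact a (sup P) = sup (img (qlact a) P)) /\
  (forall (P : A -> Prop) (q : Q), qlact (sup P) q = sup (img (fun a => qlact a q) P)) /\
  (forall (q : Q) (P : A -> Prop), qract q (sup P) = sup (img (qract q) P)) /\
  (forall (P : Q -> Prop) (a : A), qract (sup P) a = sup (img (fun q => qract q a) P)) /\
  (forall (a b : A) (q : Q), qlact (meet a b) q = qlact a (qlact b q)) /\
  (forall (a b : A) (q : Q), qract q (meet a b) = qract (qract q a) b) /\
  (forall (a b : A) (q : Q), qract (qlact a q) b = qlact a (qract q b)) /\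
  (forall (a : A) (x y : Q), qmul (qlact a x) y = qlact a (qmul x y)) /\
  (forall (a : A) (x y : Q), qmul (qract x a) y = qmul x (qlact a y)) /\
  (forall (a : A) (x y : Q), qract (qmul x y) a = qmul x (qract y a)) /\
  (forall (a b : A) (x : Q), qinv (qract (qlact a x) b) = qract (qlact b (qinv x)) a) /\
  (forall (a : A) (q m : Q), meet (qlact a q) m = qlact a (meet q m)) /\
  (forall (a : A) (q m : Q), meet m (qract q a) = qract (meet q m) a) /\
  sup_hom (@qsupp A Q) /\
  qsupp (top Q) = top A /\
  (forall x y : Q, le (qlact (qsupp x) y) (qmul (qmul x (qinv x)) y)) /\
  (forall x : Q, qlact (qsupp x) x = x) /\
  (forall (a : A) (x : Q), qsupp (qlact a x) = meet a (qsupp x)) /\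
  frame_hom (@qups A Q) /\
  (forall a : A, qups (qlact a (top Q)) = a /\ qups (qract (top Q) a) = a) /\
  (forall P : Q -> Prop, teq (qmu_radj (sup P)) (tjoin BQQ (img qmu_radj P))) /\
  (forall a : Q, sup (fun z => exists x y, le (qmul x y) a /\ z = qlact (qups x) y) = a) /\
  (forall a : Q, qlact (qups a) (top Q) = sup (fun x => le (qmul x (qinv x)) a)).

Record XData := {
  Xf :> Frame;
  xact : Q -> Xf -> Xf;
  xlact : A -> Xf -> Xf;
  xinner : Xf -> Xf -> Q;
  xsupp : Xf -> A
}.

Arguments xact {_} _ _.

Variable X : XData.

Definition is_Qmodule : Prop :=
  (forall (q : Q) (P : X -> Prop), xact q (sup P) = sup (img (xact q) P)) /\
  (forall (P : Q -> Prop) (x : X), xact (sup P) x = sup (img (fun q => xact q x) P)) /\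
  (forall (p q : Q) (x : X), xact (qmul p q) x = xact p (xact q x)) /\
  (forall (a : A) (P : X -> Prop), xlact X a (sup P) = sup (img (xlact X a) P)) /\
  (forall (P : A -> Prop) (x : X), xlact X (sup P) x = sup (img (fun a => xlact X a x) P)) /\
  (forall (a b : A) (x : X), xlact X (meet a b) x = xlact X a (xlact X b x)) /\
  (forall x : X, xlact X (top A) x = x) /\
  (forall (a : A) (q : Q) (x : X), xact (qlact a q) x = xlact X a (xact q x)) /\
  (forall (a : A) (q : Q) (x : X), xact (qract q a) x = xact q (xlact X a x)) /\
  (forall (a : A) (x y : X), xlact X a (meet x y) = meet (xlact X a x) y).

Definition is_preHilbert : Prop :=
  (forall (q : Q) (x y : X), xinner X (xact q x) y = qmul q (xinner X x y)) /\
  (forall (a : A) (x : X), qlact a (xinner X x (top X)) = xinner X (xlact X a x) (top X)) /\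
  (forall (P : X -> Prop) (y : X),
      xinner X (sup P) y = sup (img (fun x => xinner X x y) P)) /\
  (forall x y : X, xinner X x y = qinv (xinner X y x)).

Definition is_stably_supported : Prop :=
  is_Qmodule /\ is_preHilbert /\
  (forall x y : X, le x y -> le (xsupp X x) (xsupp X y)) /\
  xsupp X (top X) = top A /\
  (forall x : X, le (xlact X (xsupp X x) (top X)) (xact (xinner X x x) (top X))) /\
  (forall x : X, xlact X (xsupp X x) x = x) /\
  (forall (q : Q) (x : X), le (xsupp X (xact q x)) (qsupp q)).

(* balancing relation of Q (x)_A X:  (q <| a) (x) x = q (x) (a |> x) *)
Definition BQX (l : Q) (n : X) (l' : Q) (n' : X) : Prop :=
  exists a : A, l = qract l' a /\ n' = xlact X a n.

(* alpha_* (x) = \/_{q . y <= x} q (x) y ; this is also a_X^* *)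
Definition alpha_star (x : X) : Q -> X -> Prop :=
  tjoin BQX (fun T => exists q y, le (xact q y) x /\ T = tpure BQX q y).

Definition is_Qlocale : Prop :=
  is_stably_supported /\
  (forall P : X -> Prop, teq (alpha_star (sup P)) (tjoin BQX (img alpha_star P))) /\
  (forall x : X,
      sup (fun z => exists q y, le (xact q y) x /\ z = xlact X (qups q) y) = x).

(* balancing relation of X (x)_M X along pi^* *)
Definition BXX (M : Frame) (pistar : M -> X) (l n l' n' : X) : Prop :=
  exists m : M, l = meet l' (pistar m) /\ n' = meet n (pistar m).

Definition phi_pure (x y : X) : Q -> X -> Prop :=
  tjoin BQX (fun T => exists q z, le (xact q z) x /\ T = tpure BQX q (meet z y)).

Definition phi_map (S : X -> X -> Prop) : Q -> X -> Prop :=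
  tjoin BQX (fun T => exists x y, S x y /\ T = phi_pure x y).

Definition is_principal_Qlocale (M : Frame) (pistar : M -> X) (stilde : X -> M) : Prop :=
  is_Qlocale /\
  open_inverse_image pistar stilde /\ stilde (top X) = top M /\
  (forall (q : Q) (x : X), stilde (xact q x) = stilde (xlact X (qsupp (qinv q)) x)) /\
  tensor_iso (BXX M pistar) BQX phi_map.

(*   O(G1) = Q, O(G0) = A, d^* a = a |> 1, r^* a = 1 <| a, u^* = upsilon, *)
(*   O(G1 x_{G0} X) = Q (x)_A X, O(G1 x_{G0} G1 x_{G0} X) = Q (x)_A Q (x)_A X, *)
(*   m^* = right adjoint of the multiplication Q (x)_A Q -> Q.          *)

Definition tclosed3 (S : Q -> Q -> X -> Prop) : Prop :=
  (forall q1 q2 x q1' q2' x', S q1 q2 x -> le q1' q1 -> le q2' q2 -> le x' x ->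
     S q1' q2' x') /\
  (forall (P : Q -> Prop) q2 x, (forall q1, P q1 -> S q1 q2 x) -> S (sup P) q2 x) /\
  (forall q1 (P : Q -> Prop) x, (forall q2, P q2 -> S q1 q2 x) -> S q1 (sup P) x) /\
  (forall q1 q2 (P : X -> Prop), (forall x, P x -> S q1 q2 x) -> S q1 q2 (sup P)) /\
  (forall (a : A) q1 q2 x, S (qract q1 a) q2 x <-> S q1 (qlact a q2) x) /\
  (forall (a : A) q1 q2 x, S q1 (qract q2 a) x <-> S q1 q2 (xlact X a x)).

Definition tgen3 (R : Q -> Q -> X -> Prop) : Q -> Q -> X -> Prop :=
  fun q1 q2 x => forall T, tclosed3 T -> (forall a b c, R a b c -> T a b c) -> T q1 q2 x.

Definition teq3 (S T : Q -> Q -> X -> Prop) : Prop :=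
  forall q1 q2 x, S q1 q2 x <-> T q1 q2 x.

(* (id x a)^* : Q (x) X -> Q (x) Q (x) X,  q (x) y |-> q (x) a^*(y) *)
Definition id_x_act (astar : X -> Q -> X -> Prop) (S : Q -> X -> Prop) : Q -> Q -> X -> Prop :=
  tgen3 (fun q1 q2 z => exists y, S q1 y /\ astar y q2 z).

(* (m x id)^* : Q (x) X -> Q (x) Q (x) X,  q (x) y |-> m^*(q) (x) y *)
Definition mul_x_id (S : Q -> X -> Prop) : Q -> Q -> X -> Prop :=
  tgen3 (fun q1 q2 z => exists q, S q z /\ qmu_radj q q1 q2).

(* (X, p, a) is a G(Q)-locale, given by the inverse images p^*, a^* *)
Definition is_GQ_locale (pstar : A -> X) (astar : X -> Q -> X -> Prop) : Prop :=
  frame_hom pstar /\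
  frame_hom_into BQX astar /\
  (forall b : A, teq (astar (pstar b)) (tpure BQX (qlact b (top Q)) (top X))) /\
  (* associativity  a o (id x a) = a o (m x id) *)
  (forall x : X, teq3 (id_x_act astar (astar x)) (mul_x_id (astar x))) /\
  (* unitality  a o <u o p, id> = id *)
  (forall x : X,
      sup (fun z => exists q y, astar x q y /\ z = meet (pstar (qups q)) y) = x).

Definition is_fully_open_principal_GQ_bundle (M : Frame)
    (pstar : A -> X) (astar : X -> Q -> X -> Prop) (pistar : M -> X) : Prop :=
  is_GQ_locale pstar astar /\
  (* pi o a = pi o pi_2 *)
  (forall m : M, teq (astar (pistar m)) (tpure BQX (top Q) (pistar m))) /\
  (* <a, pi_2> : G1 x_{G0} X -> X x_M X is an isomorphism of locales;
     its inverse image sends x (x) y to a^*(x) /\ pi_2^*(y) *)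
  tensor_iso (BXX M pistar) BQX
    (fun S => tjoin BQX (fun T => exists x y, S x y /\
                 T = tmeet (astar x) (tpure BQX (top Q) y))) /\
  open_surjection pistar /\
  open_surjection pstar.

End GQ.

Arguments XData {A} Q.
Arguments Xf {A Q} _.
Arguments xact {A Q} _ _ _.
Arguments xlact {A Q} _ _ _.
Arguments xinner {A Q} _ _ _.
Arguments xsupp {A Q} _ _.
Arguments is_groupoid_quantale {A} Q.
Arguments is_principal_Qlocale {A Q} X M pistar stilde.
Arguments alpha_star {A Q} X x _ _.
Arguments is_fully_open_principal_GQ_bundle {A Q} X M pstar astar pistar.

(* The inverse image of the action is alpha_*, and a pure tensor q (x) y lies
   below alpha_*(x) exactly when q . y <= x.  With this description each bundle
   axiom becomes a statement about generators of a tensor product: the anchor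
   and pi-equivariance follow from the support identities q <| s(q^* ) = q and
   s_X(y) |> y = y, which let a tensor be moved across the balancing relation,
   and the shear map alpha_*(x) /\ pi_2^*(y) coincides with the isomorphism
   phi of (P3).  The anchor is open with direct image s_X, and pi is open by
   (P1); both are surjective because their direct images are retractions. *)

From Stdlib Require Import Setoid.

Ltac conjunct_of H :=
  let C := fresh in
  pose proof H as C; hnf in C;
  repeat match type of C with
         | _ /\ _ => let C1 := fresh in destruct C as [C1 C]
         end;
  assumption.

Section FrameFacts.
Variable F : Frame.
Implicit Types x y z : F.

Lemma meet_l x y : le (meet x y) x.
Proof. apply (proj1 (meet_glb F x y (meet x y)) (le_refl F _)). Qed.

Lemma meet_r x y : le (meet x y) y.
Proof. apply (proj1 (meet_glb F x y (meet x y)) (le_refl F _)). Qed.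

Lemma meet_intro x y z : le z x -> le z y -> le z (meet x y).
Proof. intros; apply (proj2 (meet_glb F x y z)); auto. Qed.

Lemma meet_comm x y : meet x y = meet y x.
Proof. apply le_antisym; apply meet_intro; auto using meet_l, meet_r. Qed.

Lemma le_top x : le x (top F).
Proof. apply sup_ub; exact I. Qed.

Lemma meet_top_l x : meet (top F) x = x.
Proof.
  apply le_antisym; [apply meet_r|].
  apply meet_intro; auto using le_top, le_refl.
Qed.

Lemma meet_top_r x : meet x (top F) = x.
Proof. rewrite meet_comm; apply meet_top_l. Qed.

Lemma meet_eq_l x y : le x y -> meet x y = x.
Proof.
  intros; apply le_antisym; [apply meet_l|].
  apply meet_intro; auto using le_refl.
Qed.

Lemma sup_ext (P P' : F -> Prop) : (forall z, P z <-> P' z) -> sup P = sup P'.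
Proof.
  intros H; apply le_antisym; apply sup_least; intros; apply sup_ub; apply H; auto.
Qed.

Lemma sup_img_least {G : Frame} (f : G -> F) (P : G -> Prop) y :
  (forall x : G, P x -> le (f x) y) -> le (sup (img f P)) y.
Proof. intros H; apply sup_least; intros z [x [Hx ->]]; auto. Qed.

End FrameFacts.

Lemma sup_hom_mono {L N : Frame} (f : L -> N) :
  (forall P, f (sup P) = sup (img f P)) -> forall x y, le x y -> le (f x) (f y).
Proof.
  intros Hf x y Hxy.
  assert (Hy : sup (fun z => z = x \/ z = y) = y).
  { apply le_antisym.
    - apply sup_least; intros z [-> | ->]; auto using le_refl.
    - apply sup_ub; auto. }
  rewrite <- Hy, Hf. apply sup_ub. exists x; auto.
Qed.

Lemma open_surjection_of_open_inverse_image {M X : Frame}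
    (fstar : M -> X) (fshriek : X -> M) :
  open_inverse_image fstar fshriek -> fshriek (top X) = top M ->
  open_surjection fstar.
Proof.
  intros Hopen Htop. split; [exists fshriek; exact Hopen|].
  destruct Hopen as (_ & _ & Hfrob).
  assert (Hretract : forall m, fshriek (fstar m) = m).
  { intro m. rewrite <- (meet_top_l _ (fstar m)), Hfrob, Htop. apply meet_top_l. }
  intros m m' E. rewrite <- (Hretract m), <- (Hretract m'), E. reflexivity.
Qed.

Section TensorFacts.
Variables (L N : Frame) (B : L -> N -> L -> N -> Prop).

Lemma tgen_closed (R : L -> N -> Prop) : tclosed B (tgen B R).
Proof.
  split; [|split; [|split]].
  - intros l n l' n' H H1 H2 T HT HR. apply (proj1 HT l n); auto; apply H; auto.
  - intros P n H T HT HR. apply (proj1 (proj2 HT)); intros; apply H; auto.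
  - intros l P H T HT HR. apply (proj1 (proj2 (proj2 HT))); intros; apply H; auto.
  - intros l n l' n' Hb; split; intros H T HT HR;
      pose proof (proj2 (proj2 (proj2 HT)) _ _ _ _ Hb) as E.
    + apply E, H; auto.
    + apply E, H; auto.
Qed.

Lemma tgen_incl (R : L -> N -> Prop) l n : R l n -> tgen B R l n.
Proof. intros H T _ HR; auto. Qed.

Lemma tgen_least (R T : L -> N -> Prop) : tclosed B T ->
  (forall l n, R l n -> T l n) -> forall l n, tgen B R l n -> T l n.
Proof. intros HT HR l n H; apply H; auto. Qed.

Lemma tgen_ext (R R' : L -> N -> Prop) : (forall l n, R l n <-> R' l n) ->
  teq (tgen B R) (tgen B R').
Proof.
  intros H l n; split; apply tgen_least; try apply tgen_closed;
    intros; apply tgen_incl; apply H; auto.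
Qed.

Lemma tclosed_teq (S T : L -> N -> Prop) : teq S T -> tclosed B S -> tclosed B T.
Proof.
  intros E (D & S1 & S2 & Hb); split; [|split; [|split]].
  - intros l n l' n' H ? ?; apply E; apply (D l n); auto; apply E; auto.
  - intros P n H; apply E; apply S1; intros; apply E; auto.
  - intros l P H; apply E; apply S2; intros; apply E; auto.
  - intros l n l' n' Hb0; rewrite <- (E l n), <- (E l' n'); apply Hb, Hb0.
Qed.

Lemma tmeet_closed (S T : L -> N -> Prop) :
  tclosed B S -> tclosed B T -> tclosed B (tmeet S T).
Proof.
  intros (D & S1 & S2 & Hb) (D' & S1' & S2' & Hb'); split; [|split; [|split]].
  - intros l n l' n' [H H'] ? ?; split; [eapply D|eapply D']; eauto.
  - intros P n H; split; [apply S1|apply S1']; intros; apply H; auto.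
  - intros l P H; split; [apply S2|apply S2']; intros; apply H; auto.
  - intros l n l' n' Hb0; unfold tmeet; rewrite (Hb _ _ _ _ Hb0), (Hb' _ _ _ _ Hb0).
    reflexivity.
Qed.

Lemma tpure_least (l0 : L) (n0 : N) (T : L -> N -> Prop) : tclosed B T -> T l0 n0 ->
  forall l n, tpure B l0 n0 l n -> T l n.
Proof. intros HT H0; apply tgen_least; auto. intros l n [-> ->]; auto. Qed.

Lemma tpure_self (l0 : L) (n0 : N) : tpure B l0 n0 l0 n0.
Proof. apply tgen_incl; auto. Qed.

Lemma tjoin_eq_closed (F : (L -> N -> Prop) -> Prop) (D : L -> N -> Prop) :
  tclosed B D -> (forall S, F S -> forall l n, S l n -> D l n) ->
  (forall l n, D l n -> exists S, F S /\ S l n) -> teq (tjoin B F) D.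
Proof.
  intros HD Hsub Hcover l n; split.
  - apply tgen_least; [exact HD|]. intros l' n' [S [HS HSln]]. eapply Hsub; eauto.
  - intro H. apply tgen_incl, Hcover, H.
Qed.

Lemma tjoin_pure_eq_closed (D : L -> N -> Prop) : tclosed B D ->
  teq (tjoin B (fun T => exists l n, D l n /\ T = tpure B l n)) D.
Proof.
  intro HD. apply tjoin_eq_closed; [exact HD| |].
  - intros S [l0 [n0 [H0 ->]]]. apply tpure_least; assumption.
  - intros l n H. exists (tpure B l n). split; [exists l, n; auto|apply tpure_self].
Qed.

End TensorFacts.

Lemma teq_sym {L N : Frame} (S T : L -> N -> Prop) : teq S T -> teq T S.
Proof. intros H l n; split; apply H. Qed.

Lemma teq_trans {L N : Frame} (S T U : L -> N -> Prop) :
  teq S T -> teq T U -> teq S U.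
Proof. intros H1 H2 l n; split; intro; [apply H2, H1|apply H1, H2]; auto. Qed.

Lemma tensor_hom_ext {L N L' N' : Frame}
    (B : L -> N -> L -> N -> Prop) (B' : L' -> N' -> L' -> N' -> Prop)
    (h h' : (L -> N -> Prop) -> (L' -> N' -> Prop)) :
  (forall S, teq (h S) (h' S)) -> tensor_hom B B' h' -> tensor_hom B B' h.
Proof.
  intros E (T1 & T2 & T3 & T4 & T5); split; [|split; [|split; [|split]]].
  - intros S HS. apply (tclosed_teq _ _ B' (h' S)); [apply teq_sym, E|auto].
  - intros S T HS HT HST. eapply teq_trans; [apply E|].
    eapply teq_trans; [apply T2; eauto|apply teq_sym, E].
  - intros F HF. eapply teq_trans; [apply E|]. eapply teq_trans; [apply T3; auto|].
    apply tgen_ext. intros l n; split; intros [S' [[S [HS ->]] HS']].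
    + exists (h S); split; [exists S; auto|apply E; auto].
    + exists (h' S); split; [exists S; auto|apply E; auto].
  - intros S T HS HT. eapply teq_trans; [apply E|]. eapply teq_trans; [apply T4; auto|].
    intros l n; unfold tmeet; rewrite (E S l n), (E T l n); reflexivity.
  - eapply teq_trans; [apply E|auto].
Qed.

Lemma tensor_iso_ext {L N L' N' : Frame}
    (B : L -> N -> L -> N -> Prop) (B' : L' -> N' -> L' -> N' -> Prop)
    (h h' : (L -> N -> Prop) -> (L' -> N' -> Prop)) :
  (forall S, teq (h S) (h' S)) -> tensor_iso B B' h' -> tensor_iso B B' h.
Proof.
  intros E [Hh' [g [Hg [Hgh Hhg]]]].
  assert (Hh : tensor_hom B B' h) by (eapply tensor_hom_ext; eauto).
  split; [exact Hh|]. exists g; split; [exact Hg|split].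
  - intros S HS. eapply teq_trans; [|apply Hgh; auto].
    apply (proj1 (proj2 Hg)); [apply Hh; auto|apply Hh'; auto|apply E].
  - intros T HT. eapply teq_trans; [apply E|]. apply Hhg; auto.
Qed.

Section GroupoidQuantaleModule.
Variables (A : Frame) (Q : QData A).
Hypothesis HQ : is_groupoid_quantale Q.

Lemma qmulA : forall x y z : Q, qmul (qmul x y) z = qmul x (qmul y z).
Proof. conjunct_of HQ. Qed.
Lemma qmul_sup_r : forall (x : Q) (P : Q -> Prop), qmul x (sup P) = sup (img (qmul x) P).
Proof. conjunct_of HQ. Qed.
Lemma qmul_sup_l :
  forall (P : Q -> Prop) (y : Q), qmul (sup P) y = sup (img (fun x => qmul x y) P).
Proof. conjunct_of HQ. Qed.
Lemma qinvK : forall x : Q, qinv (qinv x) = x.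
Proof. conjunct_of HQ. Qed.
Lemma qinv_mul : forall x y : Q, qinv (qmul x y) = qmul (qinv y) (qinv x).
Proof. conjunct_of HQ. Qed.
Lemma qinv_sup : forall P : Q -> Prop, qinv (sup P) = sup (img qinv P).
Proof. conjunct_of HQ. Qed.
Lemma qlact_sup_r :
  forall (a : A) (P : Q -> Prop), qlact a (sup P) = sup (img (qlact a) P).
Proof. conjunct_of HQ. Qed.
Lemma qlact_sup_l :
  forall (P : A -> Prop) (q : Q), qlact (sup P) q = sup (img (fun a => qlact a q) P).
Proof. conjunct_of HQ. Qed.
Lemma qract_sup_l :
  forall (P : Q -> Prop) (a : A), qract (sup P) a = sup (img (fun q => qract q a) P).
Proof. conjunct_of HQ. Qed.
Lemma qmul_qlact : forall (a : A) (x y : Q), qmul (qlact a x) y = qlact a (qmul x y).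
Proof. conjunct_of HQ. Qed.
Lemma qmul_qract : forall (a : A) (x y : Q), qmul (qract x a) y = qmul x (qlact a y).
Proof. conjunct_of HQ. Qed.
Lemma qract_mul : forall (a : A) (x y : Q), qract (qmul x y) a = qmul x (qract y a).
Proof. conjunct_of HQ. Qed.
Lemma qinv_bimodule :
  forall (a b : A) (x : Q), qinv (qract (qlact a x) b) = qract (qlact b (qinv x)) a.
Proof. conjunct_of HQ. Qed.
Lemma qlact_meet_r : forall (a : A) (q m : Q), meet (qlact a q) m = qlact a (meet q m).
Proof. conjunct_of HQ. Qed.
Lemma qract_meet_l : forall (a : A) (q m : Q), meet m (qract q a) = qract (meet q m) a.
Proof. conjunct_of HQ. Qed.
Lemma qsupp_sup_hom : sup_hom (@qsupp A Q).
Proof. conjunct_of HQ. Qed.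
Lemma qsupp_top : qsupp (top Q) = top A.
Proof. conjunct_of HQ. Qed.
Lemma qsupp_qlact_le : forall x y : Q, le (qlact (qsupp x) y) (qmul (qmul x (qinv x)) y).
Proof. conjunct_of HQ. Qed.
Lemma qsupp_qlactK : forall x : Q, qlact (qsupp x) x = x.
Proof. conjunct_of HQ. Qed.
Lemma qsupp_qlact : forall (a : A) (x : Q), qsupp (qlact a x) = meet a (qsupp x).
Proof. conjunct_of HQ. Qed.

Lemma qinv_mono (x y : Q) : le x y -> le (qinv x) (qinv y).
Proof. apply sup_hom_mono; intro; apply qinv_sup. Qed.
Lemma qlact_mono_r (a : A) (x y : Q) : le x y -> le (qlact a x) (qlact a y).
Proof. apply sup_hom_mono; intro; apply qlact_sup_r. Qed.
Lemma qlact_mono_l (a b : A) (x : Q) : le a b -> le (qlact a x) (qlact b x).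
Proof. apply (sup_hom_mono (fun a => qlact a x)); intro; apply qlact_sup_l. Qed.
Lemma qract_mono_l (a : A) (x y : Q) : le x y -> le (qract x a) (qract y a).
Proof. apply (sup_hom_mono (fun x => qract x a)); intro; apply qract_sup_l. Qed.
Lemma qmul_mono_r (x y z : Q) : le y z -> le (qmul x y) (qmul x z).
Proof. apply sup_hom_mono; intro; apply qmul_sup_r. Qed.
Lemma qmul_mono_l (x y z : Q) : le y z -> le (qmul y x) (qmul z x).
Proof. apply (sup_hom_mono (fun y => qmul y x)); intro; apply qmul_sup_l. Qed.
Lemma qmul_mono (x y x' y' : Q) : le x x' -> le y y' -> le (qmul x y) (qmul x' y').
Proof. intros; eapply le_trans; [apply qmul_mono_l|apply qmul_mono_r]; eauto. Qed.
Lemma qsupp_mono (x y : Q) : le x y -> le (qsupp x) (qsupp y).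
Proof. apply sup_hom_mono; intro; apply qsupp_sup_hom. Qed.

Lemma qinv_top : qinv (top Q) = top Q.
Proof.
  apply le_antisym; [apply le_top|].
  rewrite <- (qinvK (top Q)) at 1. apply qinv_mono, le_top.
Qed.

Lemma qlact_top (q : Q) : qlact (top A) q = q.
Proof.
  assert (E : qlact (top A) (top Q) = top Q).
  { rewrite <- qsupp_top. apply qsupp_qlactK. }
  rewrite <- (meet_top_l _ q), <- qlact_meet_r, E. reflexivity.
Qed.

Lemma le_top_qmul (u : Q) : le u (qmul (top Q) u).
Proof.
  pose proof (qsupp_qlact_le (top Q) u) as H.
  rewrite qsupp_top, qlact_top, qinv_top in H.
  eapply le_trans; [exact H|]. apply qmul_mono_l, le_top.
Qed.

Lemma le_qmul_top (u : Q) : le u (qmul u (top Q)).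
Proof.
  pose proof (qinv_mono _ _ (le_top_qmul (qinv u))) as H.
  rewrite qinvK, qinv_mul, qinvK, qinv_top in H. exact H.
Qed.

(* w := 1 <| 1_A is a self-adjoint left ideal with w 1 = 1 1, hence 1 1 = 1 w and
   1 <= 1 (1 1) = 1 (1 w) = (1 1) w <= w. *)
Lemma qract_top_top : qract (top Q) (top A) = top Q.
Proof.
  set (w := qract (top Q) (top A)).
  assert (Hw1 : qmul w (top Q) = qmul (top Q) (top Q)).
  { unfold w. rewrite qmul_qract, qlact_top. reflexivity. }
  assert (Hideal : forall y, le (qmul y w) w).
  { intro y. unfold w. rewrite <- qract_mul. apply qract_mono_l, le_top. }
  assert (Hinv : qinv w = w).
  { unfold w. pose proof (qinv_bimodule (top A) (top A) (top Q)) as H.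
    rewrite !qlact_top, qinv_top in H. exact H. }
  assert (H11 : qmul (top Q) (top Q) = qmul (top Q) w).
  { rewrite <- qinv_top at 1 2. rewrite <- qinv_mul, <- Hw1, qinv_mul, Hinv, qinv_top.
    reflexivity. }
  apply le_antisym; [apply le_top|].
  eapply le_trans; [apply le_top_qmul|].
  eapply le_trans; [apply le_top_qmul|].
  rewrite H11, <- qmulA. apply Hideal.
Qed.

Lemma qract_top (q : Q) : qract q (top A) = q.
Proof.
  rewrite <- (meet_top_l _ q) at 1. rewrite <- qract_meet_l, qract_top_top.
  apply meet_top_r.
Qed.

Lemma qinv_qlact (a : A) (x : Q) : qinv (qlact a x) = qract (qinv x) a.
Proof.
  pose proof (qinv_bimodule a (top A) x) as H. rewrite qract_top, qlact_top in H. exact H.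
Qed.

Lemma qinv_qract (a : A) (x : Q) : qinv (qract x a) = qlact a (qinv x).
Proof. rewrite <- (qinvK (qlact a (qinv x))), qinv_qlact, !qinvK. reflexivity. Qed.

Lemma qract_qsupp_inv (q : Q) : qract q (qsupp (qinv q)) = q.
Proof. rewrite <- (qinvK q) at 1. rewrite <- qinv_qlact, qsupp_qlactK. apply qinvK. Qed.

Lemma qsupp_qmul_le (u v : Q) : le (qsupp (qmul u v)) (qsupp u).
Proof. rewrite <- (qsupp_qlactK u) at 1. rewrite qmul_qlact, qsupp_qlact. apply meet_l. Qed.

Lemma le_qlact_qsupp (q : Q) : le q (qlact (qsupp q) (top Q)).
Proof. rewrite <- (qsupp_qlactK q) at 1. apply qlact_mono_r, le_top. Qed.

(* q <| s(z) <= (q <| s(z)) 1 = q (s(z) |> 1) <= q (z z^* 1) *)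
Lemma qsupp_qract_le (q z : Q) : le (qsupp (qract q (qsupp z))) (qsupp (qmul q z)).
Proof.
  eapply le_trans; [apply qsupp_mono, le_qmul_top|].
  rewrite qmul_qract.
  eapply le_trans; [apply qsupp_mono, qmul_mono_r, qsupp_qlact_le|].
  rewrite qmulA, <- qmulA. apply qsupp_qmul_le.
Qed.

Lemma qmul_le_closed (q : Q) : tclosed (BQQ A Q) (fun l n => le (qmul l n) q).
Proof.
  split; [|split; [|split]].
  - intros l n l' n' H Hl Hn. eapply le_trans; [|exact H]. apply qmul_mono; auto.
  - intros P n H. rewrite qmul_sup_l. apply sup_img_least. auto.
  - intros l P H. rewrite qmul_sup_r. apply sup_img_least. auto.
  - intros l n l' n' [a [-> ->]]. rewrite qmul_qract. reflexivity.
Qed.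

Lemma qmu_radj_spec (q q1 q2 : Q) : qmu_radj A Q q q1 q2 <-> le (qmul q1 q2) q.
Proof.
  revert q1 q2. apply tjoin_eq_closed; [apply qmul_le_closed| |].
  - intros S [_ Hle] l n Hln. eapply le_trans; [|exact Hle].
    apply sup_ub. exists l, n; auto.
  - intros l n H. exists (fun l n => le (qmul l n) q). split; [split|exact H].
    + apply qmul_le_closed.
    + apply sup_least. intros z [x [y [Hxy ->]]]. exact Hxy.
Qed.

Variable X : XData Q.
Hypothesis HM : is_Qmodule A Q X.

Lemma xact_sup_r :
  forall (q : Q) (P : X -> Prop), xact X q (sup P) = sup (img (xact X q) P).
Proof. conjunct_of HM. Qed.
Lemma xact_sup_l :
  forall (P : Q -> Prop) (x : X), xact X (sup P) x = sup (img (fun q => xact X q x) P).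
Proof. conjunct_of HM. Qed.
Lemma xact_mul : forall (p q : Q) (x : X), xact X (qmul p q) x = xact X p (xact X q x).
Proof. conjunct_of HM. Qed.
Lemma xlact_sup_r :
  forall (a : A) (P : X -> Prop), xlact X a (sup P) = sup (img (xlact X a) P).
Proof. conjunct_of HM. Qed.
Lemma xlact_sup_l :
  forall (P : A -> Prop) (x : X), xlact X (sup P) x = sup (img (fun a => xlact X a x) P).
Proof. conjunct_of HM. Qed.
Lemma xlact_meet_scalars :
  forall (a b : A) (x : X), xlact X (meet a b) x = xlact X a (xlact X b x).
Proof. conjunct_of HM. Qed.
Lemma xlact_top : forall x : X, xlact X (top A) x = x.
Proof. conjunct_of HM. Qed.
Lemma xact_qlact :
  forall (a : A) (q : Q) (x : X), xact X (qlact a q) x = xlact X a (xact X q x).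
Proof. conjunct_of HM. Qed.
Lemma xact_qract :
  forall (a : A) (q : Q) (x : X), xact X (qract q a) x = xact X q (xlact X a x).
Proof. conjunct_of HM. Qed.
Lemma xlact_meet_r :
  forall (a : A) (x y : X), xlact X a (meet x y) = meet (xlact X a x) y.
Proof. conjunct_of HM. Qed.

Lemma xact_mono_r (q : Q) (x y : X) : le x y -> le (xact X q x) (xact X q y).
Proof. apply sup_hom_mono; intro; apply xact_sup_r. Qed.
Lemma xact_mono_l (q q' : Q) (x : X) : le q q' -> le (xact X q x) (xact X q' x).
Proof. apply (sup_hom_mono (fun q => xact X q x)); intro; apply xact_sup_l. Qed.
Lemma xlact_mono_r (a : A) (x y : X) : le x y -> le (xlact X a x) (xlact X a y).
Proof. apply sup_hom_mono; intro; apply xlact_sup_r. Qed.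
Lemma xlact_mono_l (a b : A) (x : X) : le a b -> le (xlact X a x) (xlact X b x).
Proof. apply (sup_hom_mono (fun a => xlact X a x)); intro; apply xlact_sup_l. Qed.

Lemma xlact_eq_meet (a : A) (x : X) : xlact X a x = meet (xlact X a (top X)) x.
Proof. rewrite <- xlact_meet_r, meet_top_l. reflexivity. Qed.

Lemma anchor_frame_hom : frame_hom (fun a : A => xlact X a (top X)).
Proof.
  split; [|split].
  - intro P. apply xlact_sup_l.
  - intros a b. rewrite xlact_meet_scalars. apply xlact_eq_meet.
  - apply xlact_top.
Qed.

Lemma xact_le_closed (x : X) : tclosed (BQX A Q X) (fun q y => le (xact X q y) x).
Proof.
  split; [|split; [|split]].
  - intros l n l' n' H Hl Hn. eapply le_trans; [|exact H].
    eapply le_trans; [apply xact_mono_l, Hl|]. apply xact_mono_r, Hn.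
  - intros P n H. rewrite xact_sup_l. apply sup_img_least. auto.
  - intros l P H. rewrite xact_sup_r. apply sup_img_least. auto.
  - intros l n l' n' [a [-> ->]]. rewrite xact_qract. reflexivity.
Qed.

Lemma alpha_star_spec (x : X) (q : Q) (y : X) :
  alpha_star X x q y <-> le (xact X q y) x.
Proof. exact (tjoin_pure_eq_closed _ _ _ _ (xact_le_closed x) q y). Qed.

Lemma alpha_star_frame_hom_into :
  (forall P : X -> Prop,
      teq (alpha_star X (sup P)) (tjoin (BQX A Q X) (img (alpha_star X) P))) ->
  frame_hom_into (BQX A Q X) (alpha_star X).
Proof.
  intro Hjoin. split; [|split; [|split]].
  - intro x. apply tgen_closed.
  - exact Hjoin.
  - intros x y q z. unfold tmeet. rewrite !alpha_star_spec. apply meet_glb.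
  - intros q z. rewrite alpha_star_spec. split; intros _; [exact I|apply le_top].
Qed.

Lemma tgen3_ext (R R' : Q -> Q -> X -> Prop) :
  (forall a b c, R a b c <-> R' a b c) -> teq3 A Q X (tgen3 A Q X R) (tgen3 A Q X R').
Proof.
  intros E q1 q2 x; split; intros H T HT HR; apply H; auto; intros; apply HR, E; auto.
Qed.

(* Both generating relations say q1 . (q2 . z) <= x. *)
Lemma alpha_star_assoc (x : X) :
  teq3 A Q X (id_x_act A Q X (alpha_star X) (alpha_star X x))
             (mul_x_id A Q X (alpha_star X x)).
Proof.
  apply tgen3_ext. intros q1 q2 z. split.
  - intros [y [Hy Hz]]. rewrite alpha_star_spec in Hy, Hz.
    exists (qmul q1 q2). rewrite alpha_star_spec, qmu_radj_spec.
    split; [|apply le_refl].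
    rewrite xact_mul. eapply le_trans; [apply xact_mono_r, Hz|exact Hy].
  - intros [q [Hq Hr]]. rewrite alpha_star_spec in Hq. rewrite qmu_radj_spec in Hr.
    exists (xact X q2 z). rewrite !alpha_star_spec. split; [|apply le_refl].
    rewrite <- xact_mul. eapply le_trans; [apply xact_mono_l, Hr|exact Hq].
Qed.

Lemma alpha_star_unit :
  (forall x : X,
      sup (fun z => exists q y, le (xact X q y) x /\ z = xlact X (qups q) y) = x) ->
  forall x : X,
    sup (fun z => exists q y, alpha_star X x q y /\
           z = meet (xlact X (qups q) (top X)) y) = x.
Proof.
  intros Hunit x. etransitivity; [|apply (Hunit x)]. apply sup_ext. intro z.
  split; intros [q [y [H ->]]]; exists q, y; rewrite alpha_star_spec in *;
    rewrite (xlact_eq_meet (qups q) y); split; auto.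
Qed.

Lemma qsupp_inv_le_closed (y : X) :
  tclosed (BQX A Q X) (fun q z => le (xlact X (qsupp (qinv q)) z) y).
Proof.
  split; [|split; [|split]].
  - intros l n l' n' H Hl Hn. eapply le_trans; [|exact H].
    eapply le_trans; [apply xlact_mono_l, qsupp_mono, qinv_mono, Hl|].
    apply xlact_mono_r, Hn.
  - intros P n H. rewrite qinv_sup, qsupp_sup_hom, xlact_sup_l. apply sup_img_least.
    intros a [w [[p [Hp ->]] ->]]. apply H, Hp.
  - intros l P H. rewrite xlact_sup_r. apply sup_img_least. auto.
  - intros l n l' n' [a [-> ->]].
    rewrite qinv_qract, qsupp_qlact, meet_comm, xlact_meet_scalars. reflexivity.
Qed.

(* A generator q (x) z of the left side may be replaced by q (x) (s(q^* ) |> z),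
   which is a generator of phi(x (x) y). *)
Lemma alpha_star_meet_pure (x y : X) :
  teq (tmeet (alpha_star X x) (tpure (BQX A Q X) (top Q) y)) (phi_pure A Q X x y).
Proof.
  intros q z; split.
  - intros [Hx Hy]. rewrite alpha_star_spec in Hx.
    assert (Hcz : le (xlact X (qsupp (qinv q)) z) y).
    { refine (tpure_least _ _ _ _ _ _ (qsupp_inv_le_closed y) _ q z Hy).
      rewrite qinv_top, qsupp_top, xlact_top. apply le_refl. }
    set (c := qsupp (qinv q)) in Hcz.
    assert (Hbal : BQX A Q X q z q (xlact X c z)).
    { exists c. split; [symmetry; apply qract_qsupp_inv|reflexivity]. }
    apply (proj2 (proj2 (proj2 (tgen_closed _ _ _ _))) _ _ _ _ Hbal).
    apply tgen_incl. exists (tpure (BQX A Q X) q (meet (xlact X c z) y)). split.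
    + exists q, (xlact X c z). split; [|reflexivity].
      rewrite <- xact_qract. unfold c. rewrite qract_qsupp_inv. exact Hx.
    + rewrite meet_eq_l by exact Hcz. apply tpure_self.
  - apply tgen_least; [apply tmeet_closed; apply tgen_closed|].
    intros l n [S [[q' [z' [Hle ->]]] HS]]. revert l n HS.
    apply tpure_least; [apply tmeet_closed; apply tgen_closed|]. split.
    + apply alpha_star_spec. eapply le_trans; [|exact Hle]. apply xact_mono_r, meet_l.
    + apply (proj1 (tgen_closed _ _ _ _) (top Q) y); [apply tpure_self|apply le_top|].
      apply meet_r.
Qed.

Lemma shear_tensor_iso (M : Frame) (pistar : M -> X) :
  tensor_iso (BXX A Q X M pistar) (BQX A Q X) (phi_map A Q X) ->
  tensor_iso (BXX A Q X M pistar) (BQX A Q X)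
    (fun S => tjoin (BQX A Q X) (fun T => exists x y, S x y /\
                 T = tmeet (alpha_star X x) (tpure (BQX A Q X) (top Q) y))).
Proof.
  apply tensor_iso_ext. intro S. apply tgen_ext. intros l n.
  split; intros [T [[x [y [HS ->]]] HT]].
  - exists (phi_pure A Q X x y). split; [exists x, y; auto|apply alpha_star_meet_pure, HT].
  - exists (tmeet (alpha_star X x) (tpure (BQX A Q X) (top Q) y)).
    split; [exists x, y; auto|apply alpha_star_meet_pure, HT].
Qed.

Lemma alpha_star_pistar (M : Frame) (pistar : M -> X) (stilde : X -> M) :
  open_inverse_image pistar stilde ->
  (forall (q : Q) (x : X), stilde (xact X q x) = stilde (xlact X (qsupp (qinv q)) x)) ->
  forall m : M, teq (alpha_star X (pistar m)) (tpure (BQX A Q X) (top Q) (pistar m)).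
Proof.
  intros (_ & Hadj & _) Hequiv m q y. rewrite alpha_star_spec. split.
  - intros Hqy T HT HR.
    assert (Hbal : BQX A Q X q y q (xlact X (qsupp (qinv q)) y)).
    { exists (qsupp (qinv q)). split; [symmetry; apply qract_qsupp_inv|reflexivity]. }
    apply (proj2 (proj2 (proj2 HT)) _ _ _ _ Hbal).
    apply (proj1 HT (top Q) (pistar m)); [apply HR; auto|apply le_top|].
    apply Hadj. rewrite <- Hequiv. apply Hadj, Hqy.
  - intro H. refine (tpure_least _ _ _ _ _ _ (xact_le_closed (pistar m)) _ q y H).
    apply Hadj. rewrite Hequiv, qinv_top, qsupp_top, xlact_top. apply Hadj, le_refl.
Qed.

Section StablySupported.
Hypothesis HH : is_preHilbert A Q X.
Hypothesis xsupp_mono : forall x y : X, le x y -> le (xsupp X x) (xsupp X y).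
Hypothesis xsupp_top : xsupp X (top X) = top A.
Hypothesis xsupp_le_inner :
  forall x : X, le (xlact X (xsupp X x) (top X)) (xact X (xinner X x x) (top X)).
Hypothesis xsupp_xlactK : forall x : X, xlact X (xsupp X x) x = x.
Hypothesis xsupp_xact_le : forall (q : Q) (x : X), le (xsupp X (xact X q x)) (qsupp q).

Lemma xinner_xact : forall (q : Q) (x y : X), xinner X (xact X q x) y = qmul q (xinner X x y).
Proof. conjunct_of HH. Qed.
Lemma qlact_xinner :
  forall (a : A) (x : X), qlact a (xinner X x (top X)) = xinner X (xlact X a x) (top X).
Proof. conjunct_of HH. Qed.
Lemma xinner_sup_l : forall (P : X -> Prop) (y : X),
  xinner X (sup P) y = sup (img (fun x => xinner X x y) P).
Proof. conjunct_of HH. Qed.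
Lemma xinner_sym : forall x y : X, xinner X x y = qinv (xinner X y x).
Proof. conjunct_of HH. Qed.

Lemma xinner_mono_l (x x' y : X) : le x x' -> le (xinner X x y) (xinner X x' y).
Proof. apply (sup_hom_mono (fun x => xinner X x y)); intro; apply xinner_sup_l. Qed.

Lemma xinner_mono_r (x y y' : X) : le y y' -> le (xinner X x y) (xinner X x y').
Proof.
  intro H. rewrite (xinner_sym x y), (xinner_sym x y'). apply qinv_mono, xinner_mono_l, H.
Qed.

Lemma le_xact_xinner (x : X) : le x (xact X (xinner X x x) (top X)).
Proof.
  eapply le_trans; [|apply xsupp_le_inner].
  rewrite <- (xsupp_xlactK x) at 1. apply xlact_mono_r, le_top.
Qed.

Lemma xsupp_xinner (x : X) : xsupp X x = qsupp (xinner X x (top X)).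
Proof.
  apply le_antisym.
  - eapply le_trans; [apply xsupp_mono, le_xact_xinner|].
    eapply le_trans; [apply xsupp_xact_le|]. apply qsupp_mono, xinner_mono_r, le_top.
  - rewrite <- (xsupp_xlactK x) at 1. rewrite <- qlact_xinner, qsupp_qlact. apply meet_l.
Qed.

(* For q . y <= b |> 1, with a := s_X(y) one has q (x) y = (q <| a) (x) y and
   s(q <| a) <= s(q <y, 1>) = s(<q . y, 1>) <= b. *)
Lemma alpha_star_anchor (b : A) :
  teq (alpha_star X (xlact X b (top X))) (tpure (BQX A Q X) (qlact b (top Q)) (top X)).
Proof.
  intros q y. rewrite alpha_star_spec. split.
  - intros Hqy T HT HR.
    set (a := qsupp (xinner X y (top X))).
    assert (Hbal : BQX A Q X (qract q a) y q (xlact X a y)).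
    { exists a. split; reflexivity. }
    assert (Hsupp : le (qsupp (qract q a)) b).
    { eapply le_trans; [apply qsupp_qract_le|]. rewrite <- xinner_xact.
      eapply le_trans; [apply qsupp_mono, xinner_mono_l, Hqy|].
      rewrite <- qlact_xinner, qsupp_qlact. apply meet_l. }
    assert (Ey : xlact X a y = y) by (unfold a; rewrite <- xsupp_xinner; apply xsupp_xlactK).
    rewrite <- Ey. apply (proj2 (proj2 (proj2 HT)) _ _ _ _ Hbal).
    apply (proj1 HT (qlact b (top Q)) (top X)); [apply HR; auto| |apply le_top].
    eapply le_trans; [apply le_qlact_qsupp|]. apply qlact_mono_l, Hsupp.
  - intro H. refine (tpure_least _ _ _ _ _ _ (xact_le_closed (xlact X b (top X))) _ q y H).
    rewrite xact_qlact. apply xlact_mono_r, le_top.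
Qed.

Lemma xsupp_meet_anchor (x : X) (a : A) :
  xsupp X (meet x (xlact X a (top X))) = meet (xsupp X x) a.
Proof.
  rewrite meet_comm, <- xlact_eq_meet, !xsupp_xinner, <- qlact_xinner, qsupp_qlact.
  apply meet_comm.
Qed.

Lemma anchor_open : open_inverse_image (fun a : A => xlact X a (top X)) (xsupp X).
Proof.
  split; [apply anchor_frame_hom|split; [|exact xsupp_meet_anchor]].
  intros x a; split; intro H.
  - rewrite <- (xsupp_xlactK x). eapply le_trans; [apply xlact_mono_l, H|].
    apply xlact_mono_r, le_top.
  - eapply le_trans; [apply xsupp_mono, H|].
    rewrite <- (meet_top_l _ (xlact X a (top X))), xsupp_meet_anchor, xsupp_top,
      meet_top_l.
    apply le_refl.
Qed.

Lemma anchor_open_surjection : open_surjection (fun a : A => xlact X a (top X)).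
Proof. exact (open_surjection_of_open_inverse_image _ _ anchor_open xsupp_top). Qed.

End StablySupported.

End GroupoidQuantaleModule.

Theorem lemma5p3 (A : Frame) (Q : QData A) (M : Frame) (X : XData Q)
    (pistar : M -> X) (stilde : X -> M) :
  is_groupoid_quantale Q ->
  is_principal_Qlocale X M pistar stilde ->
  is_fully_open_principal_GQ_bundle X M
    (fun a : A => xlact X a (top X)) (alpha_star X) pistar.
Proof.
  intros HQ [[(HM & HH & Hsupp_mono & Hsupp_top & Hsupp_inner & Hsupp_lact & Hsupp_act)
               [Hjoin Hunit]]
             (Hopen & Hpi_top & Hequiv & Hphi)].
  split; [split; [|split; [|split; [|split]]]|split; [|split; [|split]]].
  - eapply anchor_frame_hom; eassumption.
  - eapply alpha_star_frame_hom_into; eassumption.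
  - intro b; eapply alpha_star_anchor; eassumption.
  - intro x; eapply alpha_star_assoc; eassumption.
  - eapply alpha_star_unit; eassumption.
  - eapply alpha_star_pistar; eassumption.
  - eapply shear_tensor_iso; eassumption.
  - eapply open_surjection_of_open_inverse_image; eassumption.
  - eapply anchor_open_surjection; eassumption.
Qed.
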